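(* Let $M\ge2$, $1\le n\le M-1$, and let $k,k'\in\mathfrak{L}_M$ satisfy $k_{n-1}=k_n=k_{n+1}=1$ and $k'=k+e^n$, where $e^n$ is the $n$th standard basis vector of $\mathbb{Z}^{M+1}$. Then, as polynomials, $a(x,k')=-2x_{n-1}x_n\,a(x,k)$; in particular $a(x,k')/a(x,k)=-2x_{n-1}x_n$.
   Context: For $M\geq1$, $\mathfrak{L}_M\subset\mathbb{Z}^{M+1}_{\geq0}$ denotes the set of $k=(k_0,\ldots,k_M)$ with $k_0=1$ such that for all $1\leq n\leq M$, $k_n>0$ implies $k_{n-1}>0$. Vectors are indexed from $0$; $\mathbb{1}=(1,\ldots,1)$; inequalities and $\min$ between vectors are entrywise. Multi-index notation: $x^k=\prod_n x_n^{k_n}$, $\binom{k}{b}=\prod_n\binom{k_n}{b_n}$. For $k\in\mathfrak{L}_M$, $\tilde k=(k_1,\ldots,k_M,0)$, $u=\min\{\mathbb{1},\tilde k\}$, $V(k)=\{b\in\mathbb{Z}^{M+1}: u\le b\le \min\{k,\tilde k\}\}$, and $$a(x,k)=\sum_{b\in V(k)}\binom{k}{b}\binom{\tilde k-u}{b-u}(-x)^{\tilde k-b}x^{k-b}\prod_{n=0}^M(1-x_n^2)^{b_n}.$$ *)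

From HB Require Import structures.
From mathcomp Require Import all_boot all_order all_algebra.
Set Implicit Arguments. Unset Strict Implicit. Unset Printing Implicit Defensive.
Import Order.TTheory GRing.Theory Num.Theory.

Definition inL (M : nat) (k : 'I_M.+1 -> nat) : bool :=
  (k ord0 == 1) &&
  [forall i : 'I_M.+1, (0 < i) ==> (0 < k i) ==> (0 < k (inord i.-1))].

Definition ktil (M : nat) (k : 'I_M.+1 -> nat) (i : 'I_M.+1) : nat :=
  if i < M then k (inord i.+1) else 0.

Definition uvec (M : nat) (k : 'I_M.+1 -> nat) (i : 'I_M.+1) : nat :=
  minn 1 (ktil k i).

Definition addE (M : nat) (k : 'I_M.+1 -> nat) (n : 'I_M.+1) (i : 'I_M.+1) : nat :=
  k i + (i == n).

(* bound on the entries of k; every b in V(k) has entries <= kmax k *)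
Definition kmax (M : nat) (k : 'I_M.+1 -> nat) : nat := \max_(i < M.+1) k i.

Definition inV (M : nat) (k : 'I_M.+1 -> nat) (b : 'I_M.+1 -> nat) : bool :=
  [forall i : 'I_M.+1, (uvec k i <= b i) && (b i <= minn (k i) (ktil k i))].

Local Open Scope ring_scope.

Definition afun (R : comNzRingType) (M : nat) (x : 'I_M.+1 -> R)
  (k : 'I_M.+1 -> nat) : R :=
  \sum_(b : {ffun 'I_M.+1 -> 'I_(kmax k).+1} | inV k (fun i => nat_of_ord (b i)))
    \prod_(i < M.+1)
      (('C(k i, b i) * 'C(ktil k i - uvec k i, b i - uvec k i))%N%:R
       * (- x i) ^+ (ktil k i - b i)
       * x i ^+ (k i - b i)
       * (1 - x i ^+ 2) ^+ b i).

From HB Require Import structures.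
From mathcomp Require Import all_boot all_order all_algebra.
From mathcomp Require Import zify ring.
Import Order.TTheory GRing.Theory Num.Theory.
Local Open Scope ring_scope.

(* The constraint b \in V(k) is a conjunction of independent constraints on the
   entries b_i, and the summand of a(x,k) is a product over i.  Hence a(x,k)
   factorizes as a product over i of one-variable sums which depend only on
   x_i, p = k_i and q = ktil_i ([afun_prod]).  When min(p, q) = 1 such a sum has
   a single term ([coord_factor_single]).
   Passing from k to k' = k + e^n changes k only at n and ktil only at n-1
   ([addE_other], [ktil_addE]), so a(x,k') and a(x,k) share all factors except
   those at n-1 and n.  Under k_{n-1} = k_n = k_{n+1} = 1 these four factors
   are single terms, and comparing them gives the ratio
   (-x_{n-1}) * (2 x_n) = -2 x_{n-1} x_n. *)

Section CoordinateFactor.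
Context {R : comNzRingType}.

(* The j-th summand of the coordinate factor with data y = x_i, p = k_i,
   q = ktil_i; note that u_i = min(1, q). *)
Definition coord_term (y : R) (p q j : nat) : R :=
  ('C(p, j) * 'C(q - minn 1 q, j - minn 1 q))%N%:R
  * (- y) ^+ (q - j) * y ^+ (p - j) * (1 - y ^+ 2) ^+ j.

Definition coord_factor (y : R) (p q : nat) : R :=
  \sum_(j < p.+1 | (minn 1 q <= j <= minn p q)%N) coord_term y p q j.

(* If min(p, q) = 1, then the range of summation is {1}. *)
Lemma coord_factor_single (y : R) (p q : nat) : minn p q = 1%N ->
  coord_factor y p q = p%:R * (- y) ^+ (q - 1) * y ^+ (p - 1) * (1 - y ^+ 2).
Proof.
move=> hpq; have [hp hq] : (0 < p)%N /\ (0 < q)%N by split; lia.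
have hu : minn 1 q = 1%N by lia.
rewrite /coord_factor (big_pred1 (inord 1)) => [|j]; last first.
  by rewrite hu hpq /= -val_eqE /= inordK //; lia.
rewrite /coord_term inordK ?ltnS // hu subnn bin1 bin0 muln1 expr1.
by rewrite mulr_natl.
Qed.

End CoordinateFactor.

(* The definition lets b_i range up to kmax k, but b_i <= k_i already, so each
   one-variable sum can be cut down to j <= k_i ([widen]). *)
Lemma afun_prod (R : comNzRingType) (M : nat) (x : 'I_M.+1 -> R)
    (k : 'I_M.+1 -> nat) :
  afun x k = \prod_i coord_factor (x i) (k i) (ktil k i).
Proof.
have widen i : coord_factor (x i) (k i) (ktil k i) =
    \sum_(j < (kmax k).+1 | (uvec k i <= j <= minn (k i) (ktil k i))%N)
      coord_term (x i) (k i) (ktil k i) j.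
  have hki : (k i <= kmax k)%N by exact: leq_bigmax.
  rewrite /coord_factor (big_ord_widen_cond (kmax k).+1
    (fun j => minn 1 (ktil k i) <= j <= minn (k i) (ktil k i))%N) ?ltnS //.
  apply: eq_bigl => j; apply/andb_idr => /andP [_ hj].
  by rewrite ltnS (leq_trans hj) ?geq_minl.
rewrite (eq_bigr _ (fun i _ => widen i)) bigA_distr_big_dep /afun.
apply: eq_bigl => b; apply/forallP/familyP => hb i; exact: hb i.
Qed.

Section AddBasisVector.
Variables (M : nat) (k : 'I_M.+1 -> nat) (n : 'I_M.+1).

Lemma addE_other (i : 'I_M.+1) : i != n -> addE k n i = k i.
Proof. by rewrite /addE => /negPf ->; rewrite addn0. Qed.

Lemma ktil_addE (i : 'I_M.+1) :
  ktil (addE k n) i = (ktil k i + (i.+1 == n :> nat))%N.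
Proof.
rewrite /ktil /addE; case: ltnP => hi; first by rewrite -val_eqE /= inordK.
by have := ltn_ord n; case: eqP => //; lia.
Qed.

End AddBasisVector.

Theorem proposition2p4 (M : nat) (hM : (2 <= M)%N) (n : 'I_M.+1)
  (hn1 : (1 <= n)%N) (hn2 : (n <= M - 1)%N) (k : 'I_M.+1 -> nat)
  (hk : inL k) (hk' : inL (addE k n))
  (hkm : k (inord n.-1) = 1%N) (hkn : k n = 1%N) (hkp : k (inord n.+1) = 1%N) :
  forall (R : comNzRingType) (x : 'I_M.+1 -> R),
    afun x (addE k n) = - 2%:R * x (inord n.-1) * x n * afun x k.
Proof.
move=> R x; set m : 'I_M.+1 := inord n.-1.
have vm : nat_of_ord m = n.-1 by rewrite inordK //; lia.
have mn : m != n by rewrite -val_eqE /= vm; lia.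
have ktil_m : ktil k m = 1%N.
  rewrite /ktil vm ifT; last by lia.
  by rewrite prednK // (_ : inord n = n) // inord_val.
have ktil_n : ktil k n = 1%N by rewrite /ktil ifT //; lia.
have ktil'_m : ktil (addE k n) m = 2%N by rewrite ktil_addE ktil_m vm prednK // eqxx.
have ktil'_n : ktil (addE k n) n = 1%N by rewrite ktil_addE ktil_n; lia.
have k'_m : addE k n m = 1%N by rewrite addE_other.
have k'_n : addE k n n = 2%N by rewrite /addE hkn eqxx.
have same_factor i : (i != m) && (i != n) ->
    coord_factor (x i) (addE k n i) (ktil (addE k n) i)
    = coord_factor (x i) (k i) (ktil k i).
  case/andP=> him hin; rewrite addE_other // ktil_addE.
  by rewrite (_ : (i.+1 == n :> nat) = false) ?addn0 //; apply/eqP; move: him;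
    rewrite -val_eqE /= vm; lia.
rewrite !afun_prod (bigD1 m) //= (bigD1 n) /= ?(eq_sym n) ?mn //.
rewrite [in RHS](bigD1 m) //= [in RHS](bigD1 n) /= ?(eq_sym n) ?mn //.
rewrite (eq_bigr _ same_factor).
rewrite k'_m ktil'_m k'_n ktil'_n hkn ktil_n hkm ktil_m.
rewrite !coord_factor_single //= !expr0 !expr1.
ring.
Qed.
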